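(* Let $K$ be a field, $V$ an infinite dimensional $K$-vector space with countable basis, $R:=\mathrm{End}_K(V)$, $\mathcal C:=\{\varphi\in R\mid\dim_K\mathrm{im}(\varphi)<\infty\}$ and $\mathcal F:=\{\varphi\in R\mid \dim_K\ker(\varphi)<\infty,\ \dim_K\mathrm{coker}(\varphi)<\infty\}$. Then: (1) $\mathrm{Ass}_l(R)=\mathrm{Ass}_r(R)=\mathrm{Ass}(R)=\{0,\mathcal C\}$; (2) $S_{l,0}(R)=S_{r,0}(R)=S_0(R)=\mathrm{Aut}_K(V)$ and $Q_l(R)=Q_r(R)=Q(R)=R$; (3) $S_{l,\mathcal C}(R)=S_{r,\mathcal C}(R)=S_{\mathcal C}(R)=\mathcal F$ and $Q_{l,\mathcal C}(R)=Q_{r,\mathcal C}(R)=Q_{\mathcal C}(R)=R/\mathcal C$; (4) $\mathrm{maxAss}_l(R)=\mathrm{maxAss}_r(R)=\mathrm{maxAss}(R)=\{\mathcal C\}$; (5) $R/\mathcal C$ is a localization maximal ring and a left (resp. right; left and right) localization maximal ring.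
   Context: Rings are associative with $1$. A multiplicatively closed subset $S$ ($1\in S$, $0\notin S$) is a left Ore set if $Sr\cap Rs\ne\emptyset$ for all $r,s$ ($s\in S$); a left denominator set if moreover $rs=0$ ($s\in S$) implies $tr=0$ for some $t\in S$; right Ore/right denominator sets are defined symmetrically; a denominator set is one that is both a left and a right denominator set. For a left (resp. right) denominator set $S$, $\mathrm{ass}_l(S)=\{r\mid sr=0\text{ some }s\in S\}$ (resp. $\mathrm{ass}_r(S)=\{r\mid rs=0\text{ some }s\in S\}$); for a denominator set these coincide, $\mathrm{ass}(S)$. $\mathrm{Ass}_l(R)$, $\mathrm{Ass}_r(R)$, $\mathrm{Ass}(R)$ are the sets of ideals $\mathrm{ass}$ of left denominator sets, right denominator sets, denominator sets respectively, and $\mathrm{maxAss}_l,\mathrm{maxAss}_r,\mathrm{maxAss}$ their sets of maximal elements under inclusion. For an ideal $\mathfrak a$ in the relevant set, $S_{l,\mathfrak a}(R)$ (resp. $S_{r,\mathfrak a}(R)$, $S_{\mathfrak a}(R)$) is the largest left denominator set (resp. right denominator set, denominator set) $S$ with $\mathrm{ass}(S)=\mathfrak a$ (they exist), and $Q_{l,\mathfrak a}(R)=S_{l,\mathfrak a}(R)^{-1}R$, $Q_{r,\mathfrak a}(R)=RS_{r,\mathfrak a}(R)^{-1}$, $Q_{\mathfrak a}(R)=S_{\mathfrak a}(R)^{-1}R$; for $\mathfrak a=0$ write $S_{l,0},Q_l$, $S_{r,0},Q_r$, $S_0,Q$. A ring $A$ is left (resp. right) localization maximal if $Q_l(A)=A$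 and $\mathrm{Ass}_l(A)=\{0\}$ (resp. $Q_r(A)=A$, $\mathrm{Ass}_r(A)=\{0\}$); left and right localization maximal if both hold; localization maximal if $Q(A)=A$ and $\mathrm{Ass}(A)=\{0\}$. *)

From HB Require Import structures.
From mathcomp Require Import all_boot all_algebra.
From mathcomp Require Import boolp classical_sets.

Set Implicit Arguments.
Unset Strict Implicit.
Unset Printing Implicit Defensive.
Import GRing.Theory.
Local Open Scope ring_scope.
Local Open Scope classical_set_scope.

Section Localization.
Variable R : pzRingType.

Definition mult_closed (S : set R) : Prop :=
  S 1 /\ ~ S 0 /\ (forall s t, S s -> S t -> S (s * t)).

Definition left_ore (S : set R) : Prop :=
  mult_closed S /\
  forall r s, S s -> exists s', exists r', S s' /\ s' * r = r' * s.

Definition right_ore (S : set R) : Prop :=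
  mult_closed S /\
  forall r s, S s -> exists s', exists r', S s' /\ r * s' = s * r'.

Definition left_denom (S : set R) : Prop :=
  left_ore S /\
  forall r s, S s -> r * s = 0 -> exists t, S t /\ t * r = 0.

Definition right_denom (S : set R) : Prop :=
  right_ore S /\
  forall r s, S s -> s * r = 0 -> exists t, S t /\ r * t = 0.

Definition denom (S : set R) : Prop := left_denom S /\ right_denom S.

Definition ass_l (S : set R) : set R := [set r | exists s, S s /\ s * r = 0].
Definition ass_r (S : set R) : set R := [set r | exists s, S s /\ r * s = 0].
(* for a denominator set, ass(S) := ass_l(S) (= ass_r(S)) *)
Definition ass (S : set R) : set R := ass_l S.

Definition Ass_l : set (set R) := [set a | exists S, left_denom S /\ ass_l S = a].
Definition Ass_r : set (set R) := [set a | exists S, right_denom S /\ ass_r S = a].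
Definition Ass : set (set R) := [set a | exists S, denom S /\ ass S = a].

Definition maximal_elements (X : set (set R)) : set (set R) :=
  [set a | X a /\ forall b, X b -> a `<=` b -> b = a].

Definition maxAss_l := maximal_elements Ass_l.
Definition maxAss_r := maximal_elements Ass_r.
Definition maxAss := maximal_elements Ass.

Definition is_S_l (a : set R) (S : set R) : Prop :=
  left_denom S /\ ass_l S = a /\
  (forall S', left_denom S' -> ass_l S' = a -> S' `<=` S).
Definition is_S_r (a : set R) (S : set R) : Prop :=
  right_denom S /\ ass_r S = a /\
  (forall S', right_denom S' -> ass_r S' = a -> S' `<=` S).
Definition is_S (a : set R) (S : set R) : Prop :=
  denom S /\ ass S = a /\
  (forall S', denom S' -> ass S' = a -> S' `<=` S).

(* Rings of fractions (Ore localizations), defined as usual by their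
   characterizing properties: sigma : R -> Q is a ring homomorphism such that
   the images of S are units, ker sigma = ass(S), and every element of Q has
   the form sigma(s)^-1 sigma(r) (left) resp. sigma(r) sigma(s)^-1 (right). *)
Definition is_unit_in (Q : pzRingType) (x : Q) : Prop :=
  exists y, y * x = 1 /\ x * y = 1.

Definition is_left_loc (Q : pzRingType) (S : set R) (sigma : {rmorphism R -> Q}) : Prop :=
  (forall s, S s -> is_unit_in (sigma s)) /\
  [set r | sigma r = 0] = ass_l S /\
  (forall q : Q, exists s, exists r, S s /\ sigma s * q = sigma r).

Definition is_right_loc (Q : pzRingType) (S : set R) (sigma : {rmorphism R -> Q}) : Prop :=
  (forall s, S s -> is_unit_in (sigma s)) /\
  [set r | sigma r = 0] = ass_r S /\
  (forall q : Q, exists s, exists r, S s /\ q * sigma s = sigma r).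

(* sigma : R -> Q realizes Q_{l,a}(R) = S_{l,a}(R)^{-1} R, etc. *)
Definition is_Q_l (a : set R) (Q : pzRingType) (sigma : {rmorphism R -> Q}) : Prop :=
  forall S, is_S_l a S -> is_left_loc S sigma.
Definition is_Q_r (a : set R) (Q : pzRingType) (sigma : {rmorphism R -> Q}) : Prop :=
  forall S, is_S_r a S -> is_right_loc S sigma.
(* for a denominator set S, S^{-1}R = R S^{-1}; both descriptions required *)
Definition is_Q (a : set R) (Q : pzRingType) (sigma : {rmorphism R -> Q}) : Prop :=
  forall S, is_S a S -> is_left_loc S sigma /\ is_right_loc S sigma.

End Localization.

Definition id_rmorph (A : pzRingType) : {rmorphism A -> A} := idfun.

Definition left_loc_maximal (A : pzRingType) : Prop :=
  is_Q_l [set 0] (id_rmorph A) /\ @Ass_l A = [set [set (0 : A)]].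
Definition right_loc_maximal (A : pzRingType) : Prop :=
  is_Q_r [set 0] (id_rmorph A) /\ @Ass_r A = [set [set (0 : A)]].
Definition loc_maximal (A : pzRingType) : Prop :=
  is_Q [set 0] (id_rmorph A) /\ @Ass A = [set [set (0 : A)]].

Section Endo.
Variables (K : fieldType) (V : lmodType K).

Record endo := Endo {
  efun :> V -> V;
  elin : forall (a : K) (u v : V), efun (a *: u + v) = a *: efun u + efun v }.

Lemma endo_ext (f g : endo) : (forall v, f v = g v) -> f = g.
Proof.
case: f g => f fl [g gl] /= fg.
have e : f = g by apply: funext.
subst g; congr Endo; exact: Prop_irrelevance.
Qed.

HB.instance Definition _ := gen_eqMixin endo.
HB.instance Definition _ := gen_choiceMixin endo.

Program Definition endo0 : endo := @Endo (fun _ => 0) _.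
Next Obligation. by rewrite scaler0 addr0. Qed.
Program Definition endo_opp (f : endo) : endo := @Endo (fun v => - f v) _.
Next Obligation. by rewrite elin opprD scalerN. Qed.
Program Definition endo_add (f g : endo) : endo := @Endo (fun v => f v + g v) _.
Next Obligation. by rewrite !elin scalerDr addrACA. Qed.
Program Definition endo1 : endo := @Endo (fun v => v) _.
Program Definition endo_mul (f g : endo) : endo := @Endo (fun v => f (g v)) _.
Next Obligation. by rewrite !elin. Qed.

Lemma endo_addA : associative endo_add.
Proof. by move=> f g h; apply: endo_ext => v /=; rewrite addrA. Qed.
Lemma endo_addC : commutative endo_add.
Proof. by move=> f g; apply: endo_ext => v /=; rewrite addrC. Qed.
Lemma endo_add0 : left_id endo0 endo_add.
Proof. by move=> f; apply: endo_ext => v /=; rewrite add0r. Qed.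
Lemma endo_addN : left_inverse endo0 endo_opp endo_add.
Proof. by move=> f; apply: endo_ext => v /=; rewrite addNr. Qed.

HB.instance Definition _ := GRing.isZmodule.Build endo
  endo_addA endo_addC endo_add0 endo_addN.

Lemma endo_mulA : associative endo_mul.
Proof. by move=> f g h; apply: endo_ext. Qed.
Lemma endo_mul1 : left_id endo1 endo_mul.
Proof. by move=> f; apply: endo_ext. Qed.
Lemma endo_mulr1 : right_id endo1 endo_mul.
Proof. by move=> f; apply: endo_ext. Qed.
Lemma endo_mulDl : left_distributive endo_mul (@GRing.add endo).
Proof. by move=> f g h; apply: endo_ext. Qed.
Lemma endo_mulDr : right_distributive endo_mul (@GRing.add endo).
Proof.
move=> f g h; apply: endo_ext => v /=.
by have := elin f 1 (g v) (h v); rewrite !scale1r.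
Qed.

HB.instance Definition _ := GRing.Zmodule_isPzRing.Build endo
  endo_mulA endo_mul1 endo_mulr1 endo_mulDl endo_mulDr.

End Endo.

Section LinAlg.
Variables (K : fieldType) (V : lmodType K).

Definition is_nat_basis (e : nat -> V) : Prop :=
  (forall (n : nat) (c : 'I_n -> K),
      \sum_(i < n) c i *: e i = 0 -> forall i, c i = 0) /\
  (forall v : V, exists n : nat, exists c : 'I_n -> K, v = \sum_(i < n) c i *: e i).

Definition span_fin (n : nat) (w : 'I_n -> V) : set V :=
  [set v | exists c : 'I_n -> K, v = \sum_(i < n) c i *: w i].

Definition fin_dim (U : set V) : Prop :=
  exists n : nat, exists w : 'I_n -> V, (forall i, U (w i)) /\ U `<=` span_fin w.

Definition im (f : endo V) : set V := [set v | exists u, v = f u].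
Definition ker (f : endo V) : set V := [set v | f v = 0].

(* dim coker f = dim V / im f < oo : finitely many vectors span V modulo im f *)
Definition fin_dim_coker (f : endo V) : Prop :=
  exists n : nat, exists w : 'I_n -> V,
    forall v : V, exists c : 'I_n -> K, im f (v - \sum_(i < n) c i *: w i).

End LinAlg.

Definition finrank (K : fieldType) (V : lmodType K) : set (endo V) :=
  [set f | fin_dim (im f)].

Definition fredholm (K : fieldType) (V : lmodType K) : set (endo V) :=
  [set f | fin_dim (ker f) /\ fin_dim_coker f].

Definition aut (K : fieldType) (V : lmodType K) : set (endo V) :=
  [set f | bijective f].

From HB Require Import structures.
From mathcomp Require Import all_boot all_algebra.
From mathcomp Require Import boolp classical_sets.

(* The endomorphism ring R of a vector space with a countable basis is von Neumann
   regular: every subspace has a complement, so every s has a quasi-inverse g with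
   s g s = s.  In a regular ring, for every proper ideal a, the elements that are units
   modulo a form a denominator set; it contains every (left or right) denominator set
   S with ass S = a, because elements of such an S have their annihilators in a, and a
   quasi-inverse then inverts them modulo a.  The localization at it is R/a, and every
   proper ideal a arises as some ass S, so Ass R is the set of proper ideals.
   The proper ideals of R are 0 and the ideal C of finite rank maps: a nonzero ideal
   contains every finite rank map (a sum of rank one maps factoring through any nonzero
   element), and an infinite rank map f satisfies a f b = 1 for suitable a, b.  Units
   modulo C are the Fredholm maps and units modulo 0 the automorphisms.  Finally R/C is
   again regular and its only proper ideal is 0. *)

Set Implicit Arguments.
Unset Strict Implicit.
Unset Printing Implicit Defensive.
Import GRing.Theory.
Local Open Scope ring_scope.
Local Open Scope classical_set_scope.

Section RegularRing.
Variable R : pzRingType.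
Implicit Types (a I S : set R) (r s t x : R).

Record ideal I : Prop := Ideal {
  ideal0 : I 0;
  idealD : forall x y, I x -> I y -> I (x + y);
  idealMl : forall r x, I x -> I (r * x);
  idealMr : forall x r, I x -> I (x * r) }.

Definition proper_ideal I := ideal I /\ ~ I 1.

Definition regular_mod a s :=
  (forall r, s * r = 0 -> a r) /\ (forall r, r * s = 0 -> a r).

Definition unit_mod a s := exists g, a (1 - s * g) /\ a (1 - g * s).

Definition von_neumann_regular := forall s : R, exists g, s * g * s = s.

Lemma proper_ideal0 : (1 : R) <> 0 -> proper_ideal [set 0].
Proof.
move=> one_neq0; split=> //; split=> //= [x y -> ->|r x ->|x r ->].
- by rewrite addr0.
- by rewrite mulr0.
- by rewrite mul0r.
Qed.

Lemma ass_l_proper_ideal S : left_denom S -> proper_ideal (ass_l S).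
Proof.
move=> [[[S1 [S0 SM]] ore] _]; split; last first.
  by move=> [s [Ss]]; rewrite mulr1 => s0; apply: S0; rewrite -s0.
split.
- by exists 1; rewrite mulr0.
- move=> x y [s1 [Ss1 Hx]] [s2 [Ss2 Hy]]; have [s' [r' [Ss' Hsr]]] := ore s1 s2 Ss2.
  exists (s' * s1); split; first exact: SM.
  by rewrite mulrDr -mulrA Hx mulr0 add0r Hsr -mulrA Hy mulr0.
- move=> r x [s [Ss Hx]]; have [s' [r' [Ss' Hsr]]] := ore r s Ss.
  by exists s'; split => //; rewrite mulrA Hsr -mulrA Hx mulr0.
- by move=> x r [s [Ss Hx]]; exists s; split => //; rewrite mulrA Hx mul0r.
Qed.

Lemma ass_r_proper_ideal S : right_denom S -> proper_ideal (ass_r S).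
Proof.
move=> [[[S1 [S0 SM]] ore] _]; split; last first.
  by move=> [s [Ss]]; rewrite mul1r => s0; apply: S0; rewrite -s0.
split.
- by exists 1; rewrite mul0r.
- move=> x y [s1 [Ss1 Hx]] [s2 [Ss2 Hy]]; have [s' [r' [Ss' Hsr]]] := ore s1 s2 Ss2.
  exists (s1 * s'); split; first exact: SM.
  by rewrite mulrDl mulrA Hx mul0r add0r Hsr mulrA Hy mul0r.
- by move=> r x [s [Ss Hx]]; exists s; split => //; rewrite -mulrA Hx mulr0.
- move=> x r [s [Ss Hx]]; have [s' [r' [Ss' Hsr]]] := ore r s Ss.
  by exists s'; split => //; rewrite -mulrA Hsr mulrA Hx mul0r.
Qed.

Lemma denom_ass_r S : denom S -> ass_r S = ass_l S.
Proof.
move=> [[_ denl] [_ denr]]; rewrite eqEsubset; split.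
  by move=> x [s [Ss Hx]]; have [t [St Ht]] := denl x s Ss Hx; exists t.
by move=> x [s [Ss Hx]]; have [t [St Ht]] := denr x s Ss Hx; exists t.
Qed.

Lemma left_denom_regular_mod S s : left_denom S -> S s -> regular_mod (ass_l S) s.
Proof.
move=> [_ den] Ss; split=> r Hr; first by exists s.
by have [t [St Ht]] := den r s Ss Hr; exists t.
Qed.

Lemma right_denom_regular_mod S s : right_denom S -> S s -> regular_mod (ass_r S) s.
Proof.
move=> [_ den] Ss; split=> r Hr; last by exists s.
by have [t [St Ht]] := den r s Ss Hr; exists t.
Qed.

Lemma unit_mod_regular_mod a s : ideal a -> unit_mod a s -> regular_mod a s.
Proof.
move=> Ia [g [sg gs]]; split=> r Hr.
  have -> : r = (1 - g * s) * r + g * (s * r) by rewrite mulrBl mul1r mulrA subrK.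
  by rewrite Hr mulr0 addr0; exact: (idealMr Ia).
have -> : r = r * (1 - s * g) + (r * s) * g by rewrite mulrBr mulr1 mulrA subrK.
by rewrite Hr mul0r addr0; exact: (idealMl Ia).
Qed.

Lemma unit_mod_unit (T : pzRingType) (sigma : {rmorphism R -> T}) a s :
  [set r | sigma r = 0] = a -> unit_mod a s -> is_unit_in (sigma s).
Proof.
move=> ker_sigma [g]; rewrite -ker_sigma /= !rmorphB !rmorphM rmorph1.
by move=> [/eqP + /eqP]; rewrite !subr_eq0 => /eqP sg /eqP gs; exists (sigma g).
Qed.

Section VonNeumannRegular.
Hypothesis regR : von_neumann_regular.

Lemma regular_mod_unit_mod a s : regular_mod a s -> unit_mod a s.
Proof.
move=> [ann_r ann_l]; have [g sgs] := regR s; exists g; split.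
  by apply: ann_l; rewrite mulrBl mul1r sgs subrr.
by apply: ann_r; rewrite mulrBr mulr1 mulrA sgs subrr.
Qed.

Section UnitsModulo.
Variable a : set R.
Hypothesis a_proper : proper_ideal a.

Let Ia : ideal a := a_proper.1.

Lemma unit_mod_mult_closed : mult_closed (unit_mod a).
Proof.
split; first by exists 1; rewrite mulr1 subrr; split; exact: (ideal0 Ia).
split; first by move=> [g]; rewrite mul0r subr0 => -[a1 _]; exact: a_proper.2 a1.
move=> s t [g [sg gs]] [h [th ht]]; exists (h * g); split.
  have -> : 1 - s * t * (h * g) = (1 - s * g) + s * (1 - t * h) * g.
    by rewrite mulrBr mulr1 mulrBl !mulrA addrA subrK.
  by apply: (idealD Ia) => //; apply: (idealMr Ia); exact: (idealMl Ia).
have -> : 1 - h * g * (s * t) = (1 - h * t) + h * (1 - g * s) * t.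
  by rewrite mulrBr mulr1 mulrBl !mulrA addrA subrK.
by apply: (idealD Ia) => //; apply: (idealMr Ia); exact: (idealMl Ia).
Qed.

Lemma unit_mod_cancel_l x : a x -> exists2 t, unit_mod a t & t * x = 0.
Proof.
move=> ax; have [g xgx] := regR x; exists (1 - x * g).
  by exists 1; rewrite mulr1 mul1r opprB addrC subrK; split; exact: (idealMr Ia).
by rewrite mulrBl mul1r xgx subrr.
Qed.

Lemma unit_mod_cancel_r x : a x -> exists2 t, unit_mod a t & x * t = 0.
Proof.
move=> ax; have [g xgx] := regR x; exists (1 - g * x).
  by exists 1; rewrite mulr1 mul1r opprB addrC subrK; split; exact: (idealMl Ia).
by rewrite mulrBr mulr1 mulrA xgx subrr.
Qed.

Lemma unit_mod_left_denom : left_denom (unit_mod a).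
Proof.
split; first split; first exact: unit_mod_mult_closed.
- move=> r s [g [_ gs]]; have [t ut tr] := unit_mod_cancel_l (idealMl Ia r gs).
  exists t, (t * r * g); split => //.
  have -> : t * r * g * s = t * r - t * (r * (1 - g * s)).
    by rewrite mulrBr mulr1 mulrBr opprB addrC subrK !mulrA.
  by rewrite tr subr0.
- move=> r s us rs; have [_ ann_l] := unit_mod_regular_mod Ia us.
  by have [t ut tr] := unit_mod_cancel_l (ann_l r rs); exists t.
Qed.

Lemma unit_mod_right_denom : right_denom (unit_mod a).
Proof.
split; first split; first exact: unit_mod_mult_closed.
- move=> r s [g [sg _]]; have [t ut rt] := unit_mod_cancel_r (idealMr Ia r sg).
  exists t, (g * r * t); split => //.
  have -> : s * (g * r * t) = r * t - (1 - s * g) * r * t.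
    by rewrite mulrBl mul1r mulrBl opprB addrC subrK !mulrA.
  by rewrite rt subr0.
- move=> r s us sr; have [ann_r _] := unit_mod_regular_mod Ia us.
  by have [t ut rt] := unit_mod_cancel_r (ann_r r sr); exists t.
Qed.

Lemma ass_l_unit_mod : ass_l (unit_mod a) = a.
Proof.
rewrite eqEsubset; split; last by move=> x /unit_mod_cancel_l [t ut tx]; exists t.
by move=> x [s [us sx]]; have [ann_r _] := unit_mod_regular_mod Ia us; exact: ann_r.
Qed.

Lemma ass_r_unit_mod : ass_r (unit_mod a) = a.
Proof.
rewrite eqEsubset; split; last by move=> x /unit_mod_cancel_r [t ut xt]; exists t.
by move=> x [s [us xs]]; have [_ ann_l] := unit_mod_regular_mod Ia us; exact: ann_l.
Qed.

Lemma unit_mod_largest_denom :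
  is_S_l a (unit_mod a) /\ is_S_r a (unit_mod a) /\ is_S a (unit_mod a).
Proof.
have maximal S : (forall s, S s -> regular_mod a s) -> S `<=` unit_mod a.
  by move=> S_reg s /S_reg; exact: regular_mod_unit_mod.
split; [|split]; (split; [|split]).
- exact: unit_mod_left_denom.
- exact: ass_l_unit_mod.
- by move=> S DS ass_a; apply: maximal => s; rewrite -ass_a; exact: left_denom_regular_mod.
- exact: unit_mod_right_denom.
- exact: ass_r_unit_mod.
- by move=> S DS ass_a; apply: maximal => s; rewrite -ass_a; exact: right_denom_regular_mod.
- by split; [exact: unit_mod_left_denom | exact: unit_mod_right_denom].
- exact: ass_l_unit_mod.
- move=> S DS ass_a; apply: maximal => s; rewrite -ass_a.
  exact: left_denom_regular_mod DS.1.
Qed.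
End UnitsModulo.

Lemma Ass_proper_ideal :
  @Ass_l R = [set a | proper_ideal a] /\ @Ass_r R = [set a | proper_ideal a] /\
  @Ass R = [set a | proper_ideal a].
Proof.
have unit_mod_ass a : proper_ideal a ->
    denom (unit_mod a) /\ ass_l (unit_mod a) = a /\ ass_r (unit_mod a) = a.
  move=> pa; split; first by split; [exact: unit_mod_left_denom | exact: unit_mod_right_denom].
  by split; [exact: ass_l_unit_mod | exact: ass_r_unit_mod].
split; [|split]; rewrite eqEsubset; split.
- by move=> _ [S [DS <-]]; exact: ass_l_proper_ideal.
- by move=> a /unit_mod_ass [[Dl _] [ass_a _]]; exists (unit_mod a).
- by move=> _ [S [DS <-]]; exact: ass_r_proper_ideal.
- by move=> a /unit_mod_ass [[_ Dr] [_ ass_a]]; exists (unit_mod a).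
- by move=> _ [S [DS <-]]; exact: ass_l_proper_ideal DS.1.
- by move=> a /unit_mod_ass [D [ass_a _]]; exists (unit_mod a).
Qed.

Lemma surjective_is_Q (T : pzRingType) (sigma : {rmorphism R -> T}) a :
  (forall t : T, exists r, sigma r = t) -> [set r | sigma r = 0] = a ->
  is_Q_l a sigma /\ is_Q_r a sigma /\ is_Q a sigma.
Proof.
move=> sigma_onto ker_sigma.
have unit_image s : regular_mod a s -> is_unit_in (sigma s).
  by move/regular_mod_unit_mod; exact: unit_mod_unit.
have fraction_l S : S 1 -> forall q, exists s r, S s /\ sigma s * q = sigma r.
  by move=> S1 q; have [r <-] := sigma_onto q; exists 1, r; rewrite rmorph1 mul1r.
have fraction_r S : S 1 -> forall q, exists s r, S s /\ q * sigma s = sigma r.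
  by move=> S1 q; have [r <-] := sigma_onto q; exists 1, r; rewrite rmorph1 mulr1.
split; [|split]; move=> S [DS [ass_a _]].
- split; [|split]; last exact: fraction_l DS.1.1.1.
    by move=> s Ss; apply: unit_image; rewrite -ass_a; exact: left_denom_regular_mod.
  by rewrite ker_sigma.
- split; [|split]; last exact: fraction_r DS.1.1.1.
    by move=> s Ss; apply: unit_image; rewrite -ass_a; exact: right_denom_regular_mod.
  by rewrite ker_sigma.
- have units s : S s -> is_unit_in (sigma s).
    by move=> Ss; apply: unit_image; rewrite -ass_a; exact: left_denom_regular_mod DS.1 Ss.
  have S1 : S 1 := DS.1.1.1.1.
  split; (split; [exact: units | split]).
  + by rewrite ker_sigma.
  + exact: fraction_l.
  + by rewrite denom_ass_r // ker_sigma.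
  + exact: fraction_r.
Qed.
End VonNeumannRegular.

End RegularRing.

Lemma von_neumann_regular_image (R T : pzRingType) (sigma : {rmorphism R -> T}) :
  (forall t : T, exists r, sigma r = t) -> von_neumann_regular R -> von_neumann_regular T.
Proof.
move=> sigma_onto regR t; have [s <-] := sigma_onto t; have [g sgs] := regR s.
by exists (sigma g); rewrite -!rmorphM sgs.
Qed.

Lemma maximal_elements_pair (R : pzRingType) (a b : set R) :
  a `<=` b -> maximal_elements [set x | x = a \/ x = b] = [set b].
Proof.
move=> ab; rewrite eqEsubset; split.
  by move=> _ [[->|->] max_x] //; have := max_x b (or_intror erefl) ab.
move=> _ ->; split; first by right.
by move=> x [->|->] // ba; apply/esym/seteqP.
Qed.

Section EndoRing.
Variables (K : fieldType) (V : lmodType K).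
Local Notation R := (endo V).
Local Notation finrank := (@finrank K V).
Local Notation fredholm := (@fredholm K V).
Local Notation aut := (@aut K V).
Implicit Types (f g h s : R) (U W : set V).

HB.instance Definition _ (f : R) :=
  GRing.isLinear.Build K V V *:%R (efun f) (fun a u v => elin f a u v).

Lemma endo_mulE f g v : (f * g) v = f (g v). Proof. by []. Qed.
Lemma endo_subE f g v : (f - g) v = f v - g v. Proof. by []. Qed.
Lemma endo0E v : (0 : R) v = 0. Proof. by []. Qed.

Lemma endo_sumE n (F : 'I_n -> R) v : (\sum_(i < n) F i) v = \sum_(i < n) F i v.
Proof. by elim/big_rec2: _ => // i h f _ <-. Qed.

Lemma linear_relation_endo (Q : V -> V -> Prop) :
  (forall v, exists x, Q v x) -> (forall v x y, Q v x -> Q v y -> x = y) ->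
  (forall a u v x y, Q u x -> Q v y -> Q (a *: u + v) (a *: x + y)) ->
  exists f : R, forall v, Q v (f v).
Proof.
move=> total functional linQ; have [g Hg] := choice total.
have g_lin a u v : g (a *: u + v) = a *: g u + g v.
  by apply: (functional (a *: u + v)); [apply: Hg | apply: linQ].
by exists (Endo g_lin).
Qed.

Record subspace U : Prop := Subspace {
  subspace0 : U 0;
  subspaceZD : forall a u v, U u -> U v -> U (a *: u + v) }.

Lemma subspaceD U u v : subspace U -> U u -> U v -> U (u + v).
Proof. by move=> sU Uu Uv; rewrite -[u]scale1r; apply: subspaceZD. Qed.
Lemma subspaceZ U a u : subspace U -> U u -> U (a *: u).
Proof. by move=> sU Uu; rewrite -[_ *: _]addr0; apply: subspaceZD => //; case: sU. Qed.
Lemma subspaceB U u v : subspace U -> U u -> U v -> U (u - v).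
Proof. by move=> sU Uu Uv; apply: subspaceD; rewrite // -scaleN1r; apply: subspaceZ. Qed.

Lemma subspace_sum U n (F : 'I_n -> V) : subspace U -> (forall i, U (F i)) -> U (\sum_(i < n) F i).
Proof. by move=> sU UF; elim/big_rec: _ => [|i x _ Ux]; [case: sU | exact: subspaceD]. Qed.

Lemma subspace_ker f : subspace (ker f).
Proof.
split=> [|a u v]; rewrite /ker /=; first by rewrite raddf0.
by move=> fu fv; rewrite linearP /= fu fv scaler0 addr0.
Qed.

Lemma subspace_im f : subspace (im f).
Proof.
split; first by exists 0; rewrite raddf0.
by move=> a _ _ [u ->] [v ->]; exists (a *: u + v); rewrite linearP.
Qed.

Lemma rank_one_endo (phi : V -> K) y :
  (forall a u v, phi (a *: u + v) = a * phi u + phi v) -> exists r : R, forall v, r v = phi v *: y.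
Proof.
move=> phi_lin; have r_lin a u v : phi (a *: u + v) *: y = a *: (phi u *: y) + phi v *: y.
  by rewrite phi_lin scalerDl scalerA.
by exists (Endo r_lin).
Qed.

Record complement W U : Prop := Complement {
  complement_subspace : subspace U;
  complement_decomp : forall v, exists2 w, W w & U (v - w);
  complement_trivial : forall x, W x -> U x -> x = 0 }.

Definition free_seq (w : nat -> V) :=
  forall n (c : 'I_n -> K), \sum_(i < n) c i *: w i = 0 -> forall i, c i = 0.

Lemma free_seq_not_in_span (w : nat -> V) :
  (forall n, ~ span_fin (fun i : 'I_n => w i) (w n)) -> free_seq w.
Proof.
move=> w_new; elim=> [|n IH] c; first by move=> _ [].
rewrite big_ord_recr /= => c_w0.
have c_max0 : c ord_max = 0.
  apply: contrapT => /eqP c_max; apply: (w_new n).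
  exists (fun i => - ((c ord_max)^-1 * c (widen_ord (leqnSn n) i))).
  have -> : w n = (c ord_max)^-1 *: (c ord_max *: w n) by rewrite scalerA mulVf ?scale1r.
  have -> : c ord_max *: w n = - \sum_(i < n) c (widen_ord (leqnSn n) i) *: w i.
    by apply/eqP; rewrite -addr_eq0 addrC c_w0.
  rewrite scalerN scaler_sumr -sumrN; apply: eq_bigr => i _.
  by rewrite scalerA scaleNr.
rewrite c_max0 scale0r addr0 in c_w0; have c_low := IH _ c_w0.
move=> i; case: (unliftP ord_max i) => [j ->|->] //.
by rewrite -(c_low j); congr c; apply: val_inj; rewrite /= /bump leqNgt ltn_ord.
Qed.

Lemma aut_unit_mod : aut = unit_mod [set 0].
Proof.
rewrite eqEsubset; split=> s.
  move=> [g gs sg]; have g_lin a u v : g (a *: u + v) = a *: g u + g v.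
    by apply: (can_inj gs); rewrite linearP /= !sg.
  exists (Endo g_lin); split; apply/eqP; rewrite subr_eq0; by apply/eqP/endo_ext => v /=; rewrite ?sg ?gs.
move=> [g [/= /eqP + /eqP]]; rewrite !subr_eq0 => /eqP sg /eqP gs.
by exists g => v; [move: (congr1 (fun f : R => f v) gs) | move: (congr1 (fun f : R => f v) sg)].
Qed.

Definition comb (w : nat -> V) (a : nat -> K) N : V := \sum_(i < N) a i *: w i.

Lemma comb_widen w a N M :
  (N <= M)%N -> (forall i, (N <= i)%N -> a i = 0) -> comb w a M = comb w a N.
Proof.
move=> NM Ha; rewrite /comb -(subnKC NM) big_split_ord /=.
by rewrite [X in _ + X]big1 ?addr0 // => i _; rewrite Ha ?scale0r // leq_addr.
Qed.

Lemma comb_ext w a b N : (forall i, (i < N)%N -> a i = b i) -> comb w a N = comb w b N.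
Proof. by move=> ab; apply: eq_bigr => i _; rewrite ab. Qed.

Lemma combZD w k a b N : comb w (fun i => k * a i + b i) N = k *: comb w a N + comb w b N.
Proof.
rewrite /comb scaler_sumr -big_split /=; apply: eq_bigr => i _.
by rewrite scalerDl scalerA.
Qed.

Section Coordinates.
Variable e : nat -> V.
Hypothesis he : is_nat_basis e.

Local Notation lc := (comb e).

Lemma lc_free a N : lc a N = 0 -> forall i, (i < N)%N -> a i = 0.
Proof. by move=> a0 i ltiN; exact: (he.1 N (fun j : 'I_N => a j) a0 (Ordinal ltiN)). Qed.

Lemma coord_exists v :
  exists a : nat -> K, exists N, (forall i, (N <= i)%N -> a i = 0) /\ v = lc a N.
Proof.
have [n [c ->]] := he.2 v; exists (fun i => if insub i is Some j then c j else 0), n.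
by split=> [i ?|]; [rewrite insubN // -leqNgt | apply: eq_bigr => i _; rewrite valK].
Qed.

Definition coord (v : V) : nat -> K := projT1 (cid (coord_exists v)).

Lemma coordP v : exists N, (forall i, (N <= i)%N -> coord v i = 0) /\ v = lc (coord v) N.
Proof. exact: projT2 (cid (coord_exists v)). Qed.

Lemma coord_lc a N : (forall i, (N <= i)%N -> a i = 0) -> forall i, coord (lc a N) i = a i.
Proof.
move=> a_supp i; have [M [coord_supp lc_coord]] := coordP (lc a N).
set P := maxn N M.
have diff0 : lc (fun j => (-1) * coord (lc a N) j + a j) P = 0.
  by rewrite combZD scaleN1r (comb_widen e (leq_maxr N M) coord_supp) -lc_coord
    (comb_widen e (leq_maxl N M) a_supp) addNr.
have [ltiP|] := ltnP i P.
  by have /eqP := lc_free diff0 ltiP; rewrite mulN1r addrC subr_eq0 => /eqP.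
by rewrite geq_max => /andP[leNi leMi]; rewrite a_supp ?coord_supp.
Qed.

Lemma coord_lc_ord a N i : coord (lc a N) i = if (i < N)%N then a i else 0.
Proof.
rewrite (comb_ext e (b := fun j => if (j < N)%N then a j else 0)); last by move=> j ->.
by rewrite coord_lc // => j; rewrite ltnNge => ->.
Qed.

Lemma coordZD k u v i : coord (k *: u + v) i = k * coord u i + coord v i.
Proof.
have [Nu [u_supp u_lc]] := coordP u; have [Nv [v_supp v_lc]] := coordP v.
have Eu : u = lc (coord u) (maxn Nu Nv) by rewrite (comb_widen e (leq_maxl Nu Nv) u_supp).
have Ev : v = lc (coord v) (maxn Nu Nv) by rewrite (comb_widen e (leq_maxr Nu Nv) v_supp).
rewrite {1}Eu {1}Ev -combZD coord_lc // => j; rewrite geq_max => /andP[? ?].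
by rewrite u_supp ?v_supp ?mulr0 ?addr0.
Qed.

Lemma coord0 i : coord 0 i = 0.
Proof.
have -> : (0 : V) = lc (fun _ => 0) 0 by rewrite /comb big_ord0.
by rewrite coord_lc_ord.
Qed.

Lemma coordZ k u i : coord (k *: u) i = k * coord u i.
Proof. by rewrite -[k *: u]addr0 coordZD coord0 addr0. Qed.

Lemma coordB u v i : coord (u - v) i = coord u i - coord v i.
Proof. by rewrite -scaleN1r addrC coordZD mulN1r addrC. Qed.

Lemma coord_e i j : coord (e i) j = (j == i)%:R.
Proof.
have -> : e i = lc (fun j => (j == i)%:R) i.+1.
  rewrite /comb big_ord_recr /= eqxx scale1r big1 ?add0r // => k _.
  by rewrite (ltn_eqF (ltn_ord k)) scale0r.
by rewrite coord_lc_ord; case: ltnP => // lt_ij; rewrite eqn_leq [(j <= i)%N]leqNgt lt_ij.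
Qed.

Definition span_e N : set V := [set v | forall i, (N <= i)%N -> coord v i = 0].

Lemma span_e_lc N v : span_e N v -> v = lc (coord v) N.
Proof.
move=> v_supp; have [M [coord_supp v_lc]] := coordP v; rewrite {1}v_lc.
by have [NM|/ltnW MN] := leqP N M; [exact: comb_widen | exact/esym/(comb_widen e)].
Qed.

Lemma span_e_exists v : exists N, span_e N v.
Proof. by have [N [v_supp _]] := coordP v; exists N. Qed.

Lemma subspacbasis_in_span_e N : subspace (span_e N).
Proof.
split=> [i _|a u v Uu Uv i Ni]; first exact: coord0.
by rewrite coordZD Uu ?Uv ?mulr0 ?addr0.
Qed.

Lemma span_e_mono N M : (N <= M)%N -> span_e N `<=` span_e M.
Proof. by move=> NM v v_supp i Mi; apply: v_supp; exact: leq_trans Mi. Qed.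

Lemma span_e0 v : span_e 0 v -> v = 0.
Proof. by move/span_e_lc ->; rewrite /comb big_ord0. Qed.

Lemma basis_in_span_e i N : span_e N (e i) -> (i < N)%N.
Proof. by rewrite ltnNge; apply: contraPN => /[swap] /[apply]; rewrite coord_e eqxx => /eqP; rewrite oner_eq0. Qed.

Lemma span_e_split N v : span_e N.+1 v -> span_e N (v - coord v N *: e N).
Proof.
move=> v_supp i Ni; rewrite coordB coordZ coord_e.
case: ltngtP => [ltiN|ltNi|->].
- by rewrite ltnNge Ni in ltiN.
- by rewrite v_supp // mulr0 subr0.
- by rewrite ?eqxx mulr1 subrr.
Qed.

Lemma span_e_span_fin N v : span_e N v -> span_fin (fun i : 'I_N => e i) v.
Proof. by move/span_e_lc ->; exists (fun i : 'I_N => coord v i). Qed.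

Definition bounded U := exists N, U `<=` span_e N.

Lemma span_fin_bounded n (w : 'I_n -> V) : bounded (span_fin w).
Proof.
have [b w_supp] := choice (fun i : 'I_n => span_e_exists (w i)).
exists (\max_(i < n) b i) => _ [c ->]; apply: subspace_sum (subspacbasis_in_span_e _) _ => i.
by apply: subspaceZ (subspacbasis_in_span_e _) _; apply: span_e_mono (leq_bigmax i) _ _.
Qed.

Lemma bounded_image f U : bounded U -> bounded (f @` U).
Proof.
move=> [N UN]; have [M fM] := span_fin_bounded (fun i : 'I_N => f (e i)).
exists M => _ [u /UN /span_e_span_fin [c ->] <-]; apply: fM.
by exists c; rewrite raddf_sum; apply: eq_bigr => i _; rewrite /= linearZ.
Qed.

Lemma span_e_subspace_fin_dim N U : subspace U -> U `<=` span_e N -> fin_dim U.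
Proof.
elim: N U => [|N IH] U sU UN.
  exists 0%N, (fun _ => 0); split; first by case.
  by move=> u /UN /span_e0 ->; exists (fun _ => 0); rewrite big_ord0.
have [[u [Uu uN]]|U_N] := pselect (exists u, U u /\ coord u N != 0); last first.
  apply: IH sU _ => v Uv i Ni; case: (ltngtP N i) => [ltNi|ltiN|<-]; first exact: UN.
    by rewrite ltnNge Ni in ltiN.
  by apply: contrapT => vN; apply: U_N; exists v; split => //; exact/eqP.
have sUN : subspace (U `&` span_e N).
  split=> [|a x y [Ux xN] [Uy yN]]; first by split; [case: sU | case: (subspacbasis_in_span_e N)].
  by split; [apply: subspaceZD | apply: (subspaceZD (subspacbasis_in_span_e N))].
have [n [w [Uw span_w]]] := IH _ sUN (fun _ => @proj2 _ _).
exists n.+1, (fun i => if unlift ord_max i is Some j then w j else u); split.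
  by move=> i; case: (unlift ord_max i) => [j|] //; case: (Uw j).
move=> x Ux; pose k := coord x N / coord u N.
have [|c xu] := span_w (x - k *: u).
  split; first by apply: subspaceB => //; exact: subspaceZ.
  move=> i Ni; rewrite coordB coordZ; case: (ltngtP N i) => [ltNi|ltiN|<-].
  - by rewrite (UN _ Ux) // (UN _ Uu) // mulr0 subr0.
  - by rewrite ltnNge Ni in ltiN.
  - by rewrite /k mulfVK // subrr.
exists (fun i => if unlift ord_max i is Some j then c j else k).
have widen_lift (i : 'I_n) : widen_ord (leqnSn n) i = lift ord_max i.
  by apply: val_inj; rewrite /= /bump leqNgt ltn_ord.
rewrite big_ord_recr /= unlift_none.
under eq_bigr => i _ do rewrite widen_lift liftK.
by rewrite -xu subrK.
Qed.

Lemma fin_dimP U : subspace U -> fin_dim U <-> bounded U.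
Proof.
move=> sU; split=> [[n [w [_ Uw]]]|[N]]; last exact: span_e_subspace_fin_dim.
by have [N wN] := span_fin_bounded w; exists N => u /Uw /wN.
Qed.

Section Complement.
Variable W : set V.
Hypothesis sW : subspace W.

(* The complement is spanned by the basis vectors [e n] outside [W + span_e n]: by
   induction on the support, a top basis vector is either absorbed into [W] or lies
   in the complement. *)
Let reachable n := exists2 w, W w & span_e n (e n - w).
Let W' := [set u | forall n, reachable n -> coord u n = 0].

Let subspace_W' : subspace W'.
Proof.
split=> [n _|a x y Hx Hy n Hn]; first exact: coord0.
by rewrite coordZD Hx ?Hy ?mulr0 ?addr0.
Qed.

Let W'_e n : ~ reachable n -> W' (e n).
Proof. by move=> Nn m Rm; rewrite coord_e; case: eqP => // mn; rewrite mn in Rm. Qed.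

Let decomp N v : span_e N v -> exists2 w, W w & W' (v - w).
Proof.
elim: N v => [|N IH] v.
  by move/span_e0 ->; exists 0; [case: sW | rewrite subr0; case: subspace_W'].
move=> vN; pose c := coord v N; have v'N := span_e_split vN.
have [[w0 Ww0 w0N]|Nreach] := pselect (reachable N).
  have [|w Ww W'w] := IH (v - c *: e N + c *: (e N - w0)).
    exact: (subspaceD (subspacbasis_in_span_e N) v'N (subspaceZ _ (subspacbasis_in_span_e N) w0N)).
  exists (w + c *: w0); first exact: (subspaceD sW Ww (subspaceZ _ sW Ww0)).
  suff -> : v - (w + c *: w0) = v - c *: e N + c *: (e N - w0) - w by [].
  by rewrite scalerBr addrA subrK opprD addrA addrAC.
have [w Ww W'w] := IH _ v'N; exists w => //.
have -> : v - w = (v - c *: e N - w) + c *: e N by rewrite addrAC subrK.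
exact: (subspaceD subspace_W' W'w (subspaceZ _ subspace_W' (W'_e Nreach))).
Qed.

Let trivial N x : span_e N x -> W x -> W' x -> x = 0.
Proof.
elim: N x => [|N IH] x; first by move/span_e0.
move=> xN Wx W'x; have [cx0|cx_neq0] := eqVneq (coord x N) 0.
  apply: IH => // i Ni; case: (ltngtP N i) => [ltNi|ltiN|<-] //; first exact: xN.
  by rewrite ltnNge Ni in ltiN.
suff : reachable N by move/W'x/eqP; rewrite (negbTE cx_neq0).
exists ((coord x N)^-1 *: x); first exact: subspaceZ.
move=> i Ni; rewrite coordB coordZ coord_e; case: (ltngtP N i) => [ltNi|ltiN|<-].
- by rewrite (xN i ltNi) mulr0 subr0.
- by rewrite ltnNge Ni in ltiN.
- by rewrite mulVf // subrr.
Qed.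

Lemma exists_complement : exists U, complement W U.
Proof.
exists W'; split=> // [v|x Wx W'x]; first by have [N /decomp] := span_e_exists v.
by have [N /trivial] := span_e_exists x; apply.
Qed.
End Complement.

Lemma endo_von_neumann_regular : von_neumann_regular R.
Proof.
move=> s; have [U1 [sU1 dec1 triv1]] := exists_complement (subspace_ker s).
have [U2 [sU2 dec2 triv2]] := exists_complement (subspace_im s).
have im_U2 v x : U2 (v - s x) -> im s (v - s x) -> v = s x.
  by move=> U2v imv; apply/eqP; rewrite -subr_eq0; apply/eqP/triv2.
have [g Hg] : exists g : R, forall v, U1 (g v) /\ U2 (v - s (g v)).
  apply: (@linear_relation_endo (fun v x => U1 x /\ U2 (v - s x))).
  - move=> v; have [_ [y ->] U2v] := dec2 v; have [k sk U1y] := dec1 y.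
    by exists (y - k); rewrite linearB /= sk subr0.
  - move=> v x y [U1x U2x] [U1y U2y]; apply/eqP; rewrite -subr_eq0; apply/eqP.
    apply: triv1 (subspaceB sU1 U1x U1y); rewrite /ker /= linearB /=.
    apply: triv2; first by exists (x - y); rewrite linearB.
    by have := subspaceB sU2 U2y U2x; rewrite opprB addrC addrA subrK.
  - move=> a u v x y [U1x U2x] [U1y U2y]; split; first exact: subspaceZD.
    by rewrite linearP /= opprD addrACA -scalerBr; apply: subspaceZD.
exists g; apply: endo_ext => v; rewrite !endo_mulE.
have [_ U2v] := Hg (s v); apply/esym/im_U2 => //.
by exists (v - g (s v)); rewrite linearB.
Qed.

Lemma finrankP f : finrank f <-> bounded (im f).
Proof. exact: fin_dimP (subspace_im f). Qed.

Lemma finrank_proper_ideal : proper_ideal finrank.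
Proof.
split; last first.
  by move=> /finrankP [N V_N]; have /basis_in_span_e := V_N (e N) (ex_intro _ (e N) erefl); rewrite ltnn.
split=> [|f g|r f|f r].
- by apply/finrankP; exists 0%N => _ [v ->]; exact: subspace0 (subspacbasis_in_span_e 0).
- move=> /finrankP [N fN] /finrankP [M gM]; apply/finrankP; exists (maxn N M) => _ [v ->].
  apply: subspaceD (subspacbasis_in_span_e _) _ _.
    by apply: span_e_mono (leq_maxl N M) _ _; apply: fN; exists v.
  by apply: span_e_mono (leq_maxr N M) _ _; apply: gM; exists v.
- move=> /finrankP /(bounded_image r) [N rfN]; apply/finrankP; exists N => _ [v ->].
  by apply: rfN; exists (f v) => //; exists v.
- by move=> /finrankP [N fN]; apply/finrankP; exists N => _ [v ->]; apply: fN; exists (r v).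
Qed.

Lemma finrank_right_annihilator s q : fin_dim (ker s) -> s * q = 0 -> finrank q.
Proof.
move=> /(fin_dimP (subspace_ker s)) [N kerN] sq; apply/finrankP.
by exists N => _ [v ->]; apply: kerN; rewrite /ker /= -endo_mulE sq.
Qed.

Lemma finrank_left_annihilator p s : fin_dim_coker s -> p * s = 0 -> finrank p.
Proof.
move=> [n [w cok]] ps; apply/finrankP.
have [N wN] := span_fin_bounded (fun i => p (w i)); exists N => _ [v ->]; apply: wN.
have [c [u sum_u]] := cok v; exists c.
have -> : v = s u + \sum_(i < n) c i *: w i by rewrite -sum_u subrK.
rewrite linearD /= -endo_mulE ps endo0E add0r raddf_sum.
by apply: eq_bigr => i _; rewrite /= linearZ.
Qed.

Lemma fredholm_unit_mod : fredholm = unit_mod finrank.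
Proof.
rewrite eqEsubset; split=> s.
  move=> [ker_s cok_s]; have [g sgs] := endo_von_neumann_regular s; exists g; split.
    by apply: finrank_left_annihilator cok_s _; rewrite mulrBl mul1r sgs subrr.
  by apply: finrank_right_annihilator ker_s _; rewrite mulrBr mulr1 mulrA sgs subrr.
move=> [g [/finrankP [N sgN] /finrankP [M gsM]]]; split.
  apply/(fin_dimP (subspace_ker s)); exists M => v sv.
  by apply: gsM; exists v; rewrite endo_subE endo_mulE sv raddf0 subr0.
exists N, (fun i : 'I_N => e i) => v; exists (fun i => coord ((1 - s * g) v) i).
have sgv : (1 - s * g) v = lc (coord ((1 - s * g) v)) N by apply/span_e_lc/sgN; exists v.
by rewrite -/(lc _ N) -sgv; exists (g v); rewrite endo_subE opprB addrC subrK.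
Qed.

Lemma finrank_sub_ideal I : ideal I -> (exists2 x, I x & x <> 0) -> finrank `<=` I.
Proof.
move=> II [x Ix x_neq0] f /finrankP [N fN].
have [v0 xv0] : exists v0, x v0 <> 0.
  by apply/existsNP => x0; apply: x_neq0; apply: endo_ext => v; rewrite x0.
have [k xk] : exists k, coord (x v0) k <> 0.
  apply/existsNP => c0; apply: xv0; have [M [_ ->]] := coordP (x v0).
  by rewrite /comb big1 // => i _; rewrite c0 scale0r.
have B_ex i : exists r : R, forall v, r v = coord (f v) i *: v0.
  by apply: rank_one_endo => a u v; rewrite linearP coordZD.
have A_ex i : exists r : R, forall z, r z = (coord z k / coord (x v0) k) *: e i.
  by apply: rank_one_endo => a u v; rewrite coordZD mulrDl mulrA.
have [[B BE] [A AE]] := (choice B_ex, choice A_ex).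
(* [f v] is the sum of the [coord (f v) i *: e i], and each term is [A i (x (B i v))]. *)
have -> : f = \sum_(i < N) A i * x * B i.
  apply: endo_ext => v; rewrite endo_sumE [LHS](span_e_lc (fN _ (ex_intro _ v erefl))).
  by apply: eq_bigr => i _; rewrite !endo_mulE BE linearZ /= AE coordZ mulfK //; apply/eqP.
elim/big_rec: _ => [|i g _ Ig]; first exact: (ideal0 II).
by apply: (idealD II) => //; apply: (idealMr II); exact: (idealMl II).
Qed.

(* Pick vectors of [U] escaping ever larger [span_e N]; each one escapes the span of
   its predecessors. *)
Lemma unbounded_free_seq U : ~ bounded U -> exists w, (forall n, U (w n)) /\ free_seq w.
Proof.
move=> U_unbounded.
have escape N : exists v, U v /\ ~ span_e N v.
  apply: contrapT => none; apply: U_unbounded; exists N => v Uv.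
  by apply: contrapT => vN; apply: none; exists v.
have [x Hx] := choice escape.
have [deg deg_span] := choice span_e_exists.
pose N k := iter k (fun M => deg (x M)) 0%N.
pose w k := x (N k).
have w_span k : span_e (N k.+1) (w k) by exact: deg_span.
have N_mono : {homo N : i j / (i <= j)%N}.
  apply: homo_leq => [//|? ? ?|k]; first exact: leq_trans.
  rewrite leqNgt; apply/negP => /ltnW lt; apply: (Hx (N k)).2.
  exact: span_e_mono lt _ (w_span k).
exists w; split=> [n|]; first exact: (Hx _).1.
apply: free_seq_not_in_span => n [c wn]; apply: (Hx (N n)).2; rewrite -/(w n) wn.
apply: subspace_sum (subspacbasis_in_span_e _) _ => i.
by apply: (subspaceZ _ (subspacbasis_in_span_e _)); exact: span_e_mono (N_mono _ _ (ltn_ord i)) _ (w_span i).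
Qed.

Lemma basis_extension (w : nat -> V) :
  exists b : R, forall N v, span_e N v -> b v = comb w (coord v) N.
Proof.
have widen v N M : span_e N v -> span_e M v -> comb w (coord v) N = comb w (coord v) M.
  move=> vN vM; rewrite -(comb_widen w (leq_maxl N M) vN).
  by rewrite -(comb_widen w (leq_maxr N M) vM).
have [b bE] : exists b : R, forall v, exists N, span_e N v /\ b v = comb w (coord v) N.
  apply: (@linear_relation_endo (fun v y => exists N, span_e N v /\ y = comb w (coord v) N)).
  - by move=> v; have [N vN] := span_e_exists v; exists (comb w (coord v) N), N.
  - by move=> v _ _ [N [vN ->]] [M [vM ->]]; exact: widen.
  - move=> a u v _ _ [N [uN ->]] [M [vM ->]]; exists (maxn N M).
    have [uP vP] := (span_e_mono (leq_maxl N M) uN, span_e_mono (leq_maxr N M) vM).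
    split; first exact: (subspaceZD (subspacbasis_in_span_e _)).
    rewrite (widen _ _ _ uN uP) (widen _ _ _ vM vP) -combZD.
    by apply: comb_ext => i _; rewrite coordZD.
exists b => N v vN; have [M [vM ->]] := bE v; exact: widen.
Qed.

Lemma injective_left_inverse h : (forall v, h v = 0 -> v = 0) -> exists k, k * h = 1.
Proof.
move=> h_inj; have [k hkh] := endo_von_neumann_regular h; exists k.
apply: endo_ext => v; apply/eqP; rewrite -subr_eq0; apply/eqP/h_inj.
by rewrite linearB /= -!endo_mulE hkh subrr.
Qed.

(* A quasi-inverse [g] of [f] makes [f] injective on the infinite dimensional [im (g f)];
   a free sequence there gives an injective [f b], which has a left inverse. *)
Lemma infinite_rank_unit f : ~ finrank f -> exists a b, a * f * b = 1.
Proof.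
move=> f_infinite; have [g fgf] := endo_von_neumann_regular f.
pose U := im (g * f).
have U_unbounded : ~ bounded U.
  move=> /(bounded_image f) [N fUN]; apply/f_infinite/finrankP; exists N => _ [v ->].
  by apply: fUN; exists ((g * f) v); [exists v | rewrite -endo_mulE mulrA fgf].
have f_inj_U y : U y -> f y = 0 -> y = 0.
  move=> [v ->] fy; rewrite endo_mulE.
  suff -> : f v = 0 by rewrite raddf0.
  by rewrite -fgf -mulrA endo_mulE.
have [w [Uw w_free]] := unbounded_free_seq U_unbounded.
have [b bE] := basis_extension w.
have [k kfb] : exists k, k * (f * b) = 1.
  apply: injective_left_inverse => v; have [N vN] := span_e_exists v.
  rewrite endo_mulE (bE _ _ vN) => fbv; rewrite (span_e_lc vN).
  have /f_inj_U /(_ fbv) wv0 : U (comb w (coord v) N).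
    apply: subspace_sum (subspace_im _) _ => i; exact: (subspaceZ _ (subspace_im _) (Uw i)).
  rewrite /comb big1 // => i _; by rewrite (w_free N (fun i : 'I_N => coord v i) wv0 i) scale0r.
by exists k, b; rewrite -mulrA.
Qed.

Lemma endo_proper_idealP I : proper_ideal I <-> I = [set 0] \/ I = finrank.
Proof.
have [C_ideal C1] := finrank_proper_ideal; split; last first.
  case=> ->; last exact: finrank_proper_ideal.
  by apply: proper_ideal0 => one0; apply: C1; rewrite one0; exact: (ideal0 C_ideal).
move=> [II I1]; have [[x Ix x_neq0]|I_zero] := pselect (exists2 x, I x & x <> 0); last first.
  left; rewrite eqEsubset; split=> [y Iy|_ ->]; last exact: (ideal0 II).
  by apply: contrapT => y_neq0; apply: I_zero; exists y.
right; rewrite eqEsubset; split; last by apply: finrank_sub_ideal II _; exists x.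
move=> y Iy; apply: contrapT => /infinite_rank_unit [a [b ayb]]; apply: I1.
by rewrite -ayb; apply: (idealMr II); exact: (idealMl II).
Qed.

Lemma quotient_proper_idealP (T : pzRingType) (pi : {rmorphism R -> T}) (J : set T) :
  (forall t : T, exists r, pi r = t) -> [set r | pi r = 0] = finrank ->
  proper_ideal J <-> J = [set 0].
Proof.
move=> pi_onto ker_pi; have [C_ideal C1] := finrank_proper_ideal; split; last first.
  move=> ->; apply: proper_ideal0 => one0; apply: C1; rewrite -ker_pi /=.
  by rewrite rmorph1.
move=> [[J0 JD JMl JMr] J1].
have pullback : proper_ideal [set r | J (pi r)].
  split; last by rewrite /= rmorph1.
  split=> [|x y|r x|x r] /=; rewrite ?raddf0 ?raddfD ?rmorphM //; [exact: JD | exact: JMl | exact: JMr].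
have pullback_ker : [set r | J (pi r)] `<=` [set r | pi r = 0].
  rewrite ker_pi; have [->|->] // := (endo_proper_idealP _).1 pullback.
  by move=> _ ->; exact: (ideal0 C_ideal).
rewrite eqEsubset; split=> [t Jt|_ ->] //; have [r rt] := pi_onto t.
by rewrite -rt; apply: pullback_ker; rewrite /= rt.
Qed.

End Coordinates.

End EndoRing.

Theorem theorem5p2 (K : fieldType) (V : lmodType K) (e : nat -> V)
    (he : is_nat_basis e) :
  let R := endo V in
  let C := @finrank K V in
  let F := @fredholm K V in
  let A := @aut K V in
  let zero := [set (0 : R)] in
  (* (1) *)
  (@Ass_l R = [set a | a = zero \/ a = C] /\
   @Ass_r R = [set a | a = zero \/ a = C] /\
   @Ass R = [set a | a = zero \/ a = C]) /\
  (* (2) *)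
  (is_S_l zero A /\ is_S_r zero A /\ is_S zero A /\
   is_Q_l zero (id_rmorph R) /\ is_Q_r zero (id_rmorph R) /\
   is_Q zero (id_rmorph R)) /\
  (* (3) : any surjective ring map pi : R -> T with kernel C realizes R/C *)
  (is_S_l C F /\ is_S_r C F /\ is_S C F /\
   forall (T : pzRingType) (pi : {rmorphism R -> T}),
     (forall t : T, exists r : R, pi r = t) -> [set r | pi r = 0] = C ->
     is_Q_l C pi /\ is_Q_r C pi /\ is_Q C pi) /\
  (* (4) *)
  (@maxAss_l R = [set C] /\ @maxAss_r R = [set C] /\ @maxAss R = [set C]) /\
  (* (5) *)
  (forall (T : pzRingType) (pi : {rmorphism R -> T}),
     (forall t : T, exists r : R, pi r = t) -> [set r | pi r = 0] = C ->
     loc_maximal T /\ left_loc_maximal T /\ right_loc_maximal T).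
Proof.
move=> R C F A zero.
have regR : von_neumann_regular R := endo_von_neumann_regular he.
have idealsR : [set a | proper_ideal a] = [set a | a = zero \/ a = C].
  by apply/seteqP; split=> a /(endo_proper_idealP he).
have [zero_proper C_proper] : proper_ideal zero /\ proper_ideal C.
  by split; apply/(endo_proper_idealP he); [left | right].
have [AssRl [AssRr AssR]] := Ass_proper_ideal regR; rewrite idealsR in AssRl AssRr AssR.
have id_onto (T : pzRingType) (t : T) : exists r, id_rmorph T r = t by exists t.
have id_ker (T : pzRingType) : [set r | id_rmorph T r = 0] = [set 0] by [].
split; first by [].
split.
  have [SAl [SAr SA]] := unit_mod_largest_denom regR zero_proper.
  have [Ql [Qr Q]] := surjective_is_Q regR (id_onto R) (id_ker R).
  by rewrite /A aut_unit_mod.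
split.
  have [SFl [SFr SF]] := unit_mod_largest_denom regR C_proper.
  rewrite /F (fredholm_unit_mod he); do 3!(split; first by []).
  by move=> T pi pi_onto ker_pi; have := surjective_is_Q regR pi_onto ker_pi.
split.
  have zero_C : zero `<=` C by move=> _ ->; case: C_proper => -[].
  by rewrite /maxAss_l /maxAss_r /maxAss AssRl AssRr AssR !maximal_elements_pair.
move=> T pi pi_onto ker_pi.
have regT := von_neumann_regular_image pi_onto regR.
have idealsT : [set J | proper_ideal J] = [set [set (0 : T)]].
  by apply/seteqP; split=> J /(quotient_proper_idealP he _ pi_onto ker_pi).
have [AssTl [AssTr AssT]] := Ass_proper_ideal regT; rewrite idealsT in AssTl AssTr AssT.
have [Ql [Qr Q]] := surjective_is_Q regT (id_onto T) (id_ker T).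
by do 2!split.
Qed.
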